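(* $\mathrm{PoTF}_{\textsc{Min-Max}}=\Theta(\min(\tau,n))$, i.e., the price of temporal fairness with respect to the \textsc{Min-Max} objective is both $O(\min(\tau,n))$ and $\Omega(\min(\tau,n))$, where $n$ is the number of agents and $\tau$ the number of constraints.
   Context: An instance $\mathcal{I}=(N,P,T,(\mathbf{D}_i)_{i\in N})$ has agents $N=[n]$, projects $P$, timesteps $T=[\ell]$, and disapproval sets $D_{ik}\subseteq P$. An outcome is $\mathbf{o}=(o_1,\dots,o_\ell)\in P^\ell$; $\Pi(\mathcal{I})$ is the set of all outcomes. $d_i(\mathbf{o}^{(k)})=|\{t\in[k]:o_t\in D_{it}\}|$ and $d_i(\mathbf{o})=d_i(\mathbf{o}^{(\ell)})$. A set of constraints is $\mathbf{A}=\{(t_1,\lambda_1),\dots,(t_\tau,\lambda_\tau)\}$ with $t_j\in T$, $\lambda_j\in\{0,\dots,\ell\}$, $t_1\le\dots\le t_\tau$, $\lambda_1\le\dots\le\lambda_\tau$; $\Pi_{\mathbf{A}}(\mathcal{I})$ is the set of outcomes with $\max_{i\in N}d_i(\mathbf{o}^{(t)})\le\lambda$ for all $(t,\lambda)\in\mathbf{A}$, and $\mathbf{A}$ is feasible if $\Pi_{\mathbf{A}}(\mathcal{I})\neq\emptyset$. The \textsc{Min-Max}-value of $\mathbf{o}$ is $\max_{i\in N}d_i(\mathbf{o})$. The price of temporal fairness is $\mathrm{PoTF}_{\textsc{Min-Max}}=\sup_{\mathcal{I},\mathbf{A}\text{ feasible}}\frac{\min_{\mathbf{o}\in\Pi_{\mathbf{A}}(\mathcal{I})}\max_i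 d_i(\mathbf{o})}{\min_{\mathbf{o}\in\Pi(\mathcal{I})}\max_i d_i(\mathbf{o})}$, considered as a function of $n$ and $\tau$. *)

From mathcomp Require Import all_boot.
Set Implicit Arguments. Unset Strict Implicit. Unset Printing Implicit Defensive.

(* Agents N = 'I_n, timesteps T = [l] represented as 'I_l (timestep t+1 <-> t),
   projects a finite type P.  D i t = disapproval set of agent i at timestep t+1.
   An outcome is a finite function 'I_l -> P. *)

Section Temporal.
Variables (n l : nat) (P : finType).
Variable D : 'I_n -> 'I_l -> {set P}.

Definition dis (o : {ffun 'I_l -> P}) (i : 'I_n) (k : nat) : nat :=
  #|[set t : 'I_l | (t < k) && (o t \in D i t)]|.

Definition maxdis (o : {ffun 'I_l -> P}) (k : nat) : nat :=
  \max_(i < n) dis o i k.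

Definition minmax_cost (o : {ffun 'I_l -> P}) : nat := maxdis o l.

Definition satisfies (A : seq (nat * nat)) (o : {ffun 'I_l -> P}) : bool :=
  all (fun c => maxdis o c.1 <= c.2) A.

Definition feasible (A : seq (nat * nat)) : Prop :=
  exists o : {ffun 'I_l -> P}, satisfies A o.
End Temporal.

Definition constraint_set (l tau : nat) (A : seq (nat * nat)) : bool :=
  [&& size A == tau, uniq A,
      all (fun c => (1 <= c.1 <= l) && (c.2 <= l)) A,
      sorted leq (map fst A) & sorted leq (map snd A)].

From mathcomp Require Import all_boot zify.
Set Implicit Arguments. Unset Strict Implicit. Unset Printing Implicit Defensive.

(* Let K be the unconstrained optimum, attained by o, and let oF be
   feasible.  Taking oF at the steps where somebody disapproves of o and o
   elsewhere never raises a prefix disapproval above that of oF, and every agent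
   then disapproves only at steps where some agent disapproves of o: cost <= n K.
   Alternatively, the tau thresholds meet at most tau of the tau + 1 windows
   (jK, jK + K), so some level L = jK <= tau K has none strictly between L and
   L + K; following oF up to the last deadline with threshold <= L and o
   afterwards meets every constraint at cost <= L + K <= (tau + 1) K.  With k = min(tau, n), steps 2j and 2j+1 (j < k) oppose agent j,
   who disapproves of [true], to everybody else, who disapproves of [false]; a
   final step is disapproved by all.  Always choosing [true] costs at most 3, but
   the constraints (2j + 2, j + 1) force, by induction on j, at least j choices
   of [false] among the first 2j steps.  Agent k - 1 disapproves of those made
   before step 2k - 2 and of the final step, so every constrained outcome costs
   at least k. *)

Lemma card_bigcup_le (I T : finType) (B : I -> {set T}) :
  #|\bigcup_i B i| <= \sum_i #|B i|.
Proof.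
elim/big_ind2: _ => [|a X b Y le_X le_Y|//]; first by rewrite cards0.
exact: leq_trans (leq_card_setU X Y).1 (leq_add le_X le_Y).
Qed.

Lemma exists_notin (s : seq nat) : exists2 j, j <= size s & j \notin s.
Proof.
case: (boolP (all (mem s) (iota 0 (size s).+1))) => [/allP sub | /allPn [j]].
  by have := uniq_leq_size (iota_uniq 0 _) sub; rewrite size_iota ltnn.
by rewrite mem_iota ltnS => le_j j_notin; exists j.
Qed.

Lemma exists_gap (s : seq nat) K :
  exists2 j, j <= size s & forall x, x \in s -> (x <= j * K) || (j * K + K <= x).
Proof.
have [j le_j_s j_notin] := exists_notin [seq x %/ K | x <- s].
rewrite size_map in le_j_s; exists j => // x xs.
have [->|K_gt0] := posnP K; first by rewrite muln0 leq0n orbT.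
have : x %/ K != j by apply: contraNneq j_notin => <-; exact: map_f.
rewrite neq_ltn ltn_divLR // -[j < _]/(j.+1 <= _) leq_divRL // mulSn addnC.
by case/orP=> [/ltnW -> | ->]; rewrite ?orbT.
Qed.

Lemma card_prefixS l (b : pred 'I_l) m (lt_m : m < l) :
  #|[set t : 'I_l | (t < m.+1) && b t]| =
  #|[set t : 'I_l | (t < m) && b t]| + b (Ordinal lt_m).
Proof.
rewrite (cardsD1 (Ordinal lt_m)) inE ltnSn addnC; congr (_ + _).
apply: eq_card => t; rewrite !inE -val_eqE /= ltnS leq_eqVlt.
by case: (ltngtP t m).
Qed.

Section Outcomes.
Variables (n l : nat) (P : finType) (D : 'I_n -> 'I_l -> {set P}).
Implicit Types (o : {ffun 'I_l -> P}) (A : seq (nat * nat)).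

Lemma satisfiesP A o :
  reflect (forall c, c \in A -> forall i, dis D o i c.1 <= c.2) (satisfies D A o).
Proof.
apply: (iffP allP) => sat c /sat; first by move/bigmax_leqP => le_c i; exact: le_c.
by move=> le_c; apply/bigmax_leqP => i _; exact: le_c.
Qed.

Lemma dis0 o i : dis D o i 0 = 0.
Proof. by apply: eq_card0 => t; rewrite inE. Qed.

Lemma dis_mono o i : {homo dis D o i : m1 m2 / m1 <= m2}.
Proof.
move=> m1 m2 le_m; apply: subset_leq_card; apply/subsetP => t.
by rewrite !inE => /andP[lt_t ->]; rewrite (leq_trans lt_t).
Qed.

Lemma disS o i m (lt_m : m < l) :
  dis D o i m.+1 = dis D o i m + (o (Ordinal lt_m) \in D i (Ordinal lt_m)).
Proof. exact: card_prefixS. Qed.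

Lemma dis_le_cost o i m : dis D o i m <= minmax_cost D o.
Proof.
apply: leq_trans (leq_bigmax i); apply: subset_leq_card; apply/subsetP => t.
by rewrite !inE ltn_ord => /andP[].
Qed.

Lemma cost_le_agents A oF o : satisfies D A oF ->
  exists2 oA, satisfies D A oA & minmax_cost D oA <= n * minmax_cost D o.
Proof.
move=> /satisfiesP satF.
pose oA : {ffun 'I_l -> P} := [ffun t => if [exists j, o t \in D j t] then oF t else o t].
exists oA.
  apply/satisfiesP => c cA i; apply: leq_trans (satF c cA i).
  apply: subset_leq_card; apply/subsetP => t; rewrite !inE ffunE.
  case: existsP => [_ //|no_j] /andP[-> dis_t].
  by case: no_j; exists i.
apply/bigmax_leqP => i _.
have cover :
    dis D oA i l <= #|\bigcup_(j : 'I_n) [set t : 'I_l | (t < l) && (o t \in D j t)]|.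
  apply: subset_leq_card; apply/subsetP => t; rewrite inE ffunE.
  case: existsP => [[j dis_j] _ | _ /andP[lt_t dis_t]]; apply/bigcupP.
    by exists j; rewrite // inE ltn_ord.
  by exists i; rewrite // inE lt_t.
apply: leq_trans cover (leq_trans (card_bigcup_le _) _).
have -> : n * minmax_cost D o = \sum_(j < n) minmax_cost D o.
  by rewrite sum_nat_const card_ord.
by apply: leq_sum => j _; exact: dis_le_cost.
Qed.

Definition splice (s : nat) o1 o2 : {ffun 'I_l -> P} :=
  [ffun t : 'I_l => if t < s then o1 t else o2 t].

Lemma dis_splice_prefix s o1 o2 i m : m <= s ->
  dis D (splice s o1 o2) i m = dis D o1 i m.
Proof.
move=> le_m; apply: eq_card => t; rewrite !inE ffunE.
by case: (ltnP t s) => // le_t; rewrite ltnNge (leq_trans le_m le_t).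
Qed.

Lemma dis_splice_le s o1 o2 i m :
  dis D (splice s o1 o2) i m <= dis D o1 i s + dis D o2 i m.
Proof.
apply: leq_trans (leq_card_setU _ _).1; apply: subset_leq_card.
apply/subsetP => t; rewrite !inE ffunE.
by case: (ltnP t s) => [_|lt_t] /andP[lt_m dis_t]; rewrite ?lt_t lt_m dis_t ?orbT.
Qed.

Lemma satisfies_prefix A o L : satisfies D A o ->
  exists2 s, (forall i, dis D o i s <= L) & forall c, c \in A -> c.2 <= L -> c.1 <= s.
Proof.
move=> /satisfiesP sat; exists (\max_(c <- A | c.2 <= L) c.1); last first.
  by move=> c cA le_c; exact: leq_bigmax_seq.
move=> i; rewrite big_seq_cond; apply: (big_ind (fun s => dis D o i s <= L)).
- by rewrite dis0.
- by move=> x y le_x le_y /=; case: (leqP x y).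
- by move=> c /andP[cA le_c]; exact: leq_trans (sat c cA i) le_c.
Qed.

Lemma cost_le_constraints A oF o : satisfies D A oF ->
  exists2 oA, satisfies D A oA & minmax_cost D oA <= (size A).+1 * minmax_cost D o.
Proof.
move=> satF; set K := minmax_cost D o.
have [j le_j gap] := exists_gap [seq c.2 | c <- A] K.
have [s dis_s le_s] := satisfies_prefix (j * K) satF.
have dis_le i m : dis D (splice s oF o) i m <= j * K + K.
  exact: leq_trans (dis_splice_le _ _ _ _ _) (leq_add (dis_s i) (dis_le_cost o i m)).
exists (splice s oF o).
  apply/satisfiesP => c cA i; case/orP: (gap c.2 (map_f _ cA)) => [le_c | ge_c].
    by rewrite dis_splice_prefix ?le_s //; exact: (satisfiesP _ _ satF).
  exact: leq_trans (dis_le i c.1) ge_c.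
apply/bigmax_leqP => i _; apply: leq_trans (dis_le i l) _.
by rewrite size_map in le_j; rewrite mulSn addnC leq_add2l leq_mul2r le_j orbT.
Qed.

End Outcomes.

Definition pair_instance (n k l : nat) (i : 'I_n) (t : 'I_l) : {set bool} :=
  if t < k.*2 then [set (i == t./2 :> nat)]
  else if t == k.*2 :> nat then setT else set0.

(* The constraints with deadline [l] only pad the list to [tau] distinct entries. *)
Definition pair_constraints (k tau l : nat) : seq (nat * nat) :=
  [seq (if j < k then j.+1.*2 else l, j.+1) | j <- iota 0 tau].

Lemma pair_constraints_set k tau l : k.*2 <= l -> tau <= l ->
  constraint_set l tau (pair_constraints k tau l).
Proof.
move=> le_2k_l le_tau_l.
rewrite /constraint_set size_map size_iota eqxx /= -!map_comp.
apply/and4P; split.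
- by rewrite map_inj_uniq ?iota_uniq // => x y /(congr1 snd) [].
- apply/allP => c /mapP[j]; rewrite mem_iota => /= lt_j -> /=.
  case: ifP => lt_jk; lia.
- apply: homo_sorted (iota_sorted 0 tau) => x y /= le_xy.
  case: ifP => lt_x; case: ifP => lt_y; lia.
- by apply: homo_sorted (iota_sorted 0 tau) => x y /=; rewrite ltnS.
Qed.

Section PairInstance.
Variables (n k l : nat).
Hypothesis lt_2k_l : k.*2 < l.
Local Notation D := (@pair_instance n k l).
Implicit Types (o : {ffun 'I_l -> bool}) (i : 'I_n).

Lemma in_pair_instance (b : bool) i (t : 'I_l) : t < k.*2 ->
  (b \in D i t) = (b == (i == t./2 :> nat)).
Proof. by rewrite /pair_instance => ->; rewrite inE. Qed.

Lemma dis_pair_total o i : dis D o i l = (dis D o i k.*2).+1.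
Proof.
have -> : dis D o i l = dis D o i k.*2.+1.
  apply: eq_card => t; rewrite !inE ltn_ord /= ltnS /pair_instance.
  by case: (ltngtP t k.*2) => // lt_t; rewrite inE.
by rewrite (disS _ _ _ lt_2k_l) /pair_instance /= ltnn eqxx inE addn1.
Qed.

Lemma cost_pair_gt0 o : 0 < n -> 0 < minmax_cost D o.
Proof.
move=> n_gt0; apply: leq_trans _ (dis_le_cost D o (Ordinal n_gt0) l).
by rewrite dis_pair_total.
Qed.

Definition alternating : {ffun 'I_l -> bool} := [ffun t : 'I_l => odd t].

Lemma dis_alternating i m : m <= k -> dis D alternating i m.*2 = m.
Proof.
elim: m => [|m IHm] lt_mk; first exact: dis0.
have lt_2m_2k : m.*2.+1 < k.*2 by rewrite -doubleS leq_double.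
have lt_2m : m.*2.+1 < l := ltn_trans lt_2m_2k lt_2k_l.
rewrite doubleS (disS _ _ _ lt_2m) (disS _ _ _ (ltnW lt_2m)) IHm ?(ltnW lt_mk) //.
rewrite !in_pair_instance ?(ltnW lt_2m_2k) //= !ffunE /= odd_double doubleK uphalf_double.
by case: (i == m :> nat); rewrite addn0 addn1.
Qed.

Lemma alternating_satisfies tau :
  satisfies D (pair_constraints k tau l) alternating.
Proof.
apply/satisfiesP => c /mapP[j _ ->] i /=; case: ifP => lt_jk.
  by rewrite dis_alternating.
by rewrite dis_pair_total dis_alternating // ltnS leqNgt lt_jk.
Qed.

Lemma dis_all_true i m : m <= k -> dis D [ffun => true] i m.*2 = (i < m).*2.
Proof.
elim: m => [|m IHm] lt_mk; first exact: dis0.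
have lt_2m_2k : m.*2.+1 < k.*2 by rewrite -doubleS leq_double.
have lt_2m : m.*2.+1 < l := ltn_trans lt_2m_2k lt_2k_l.
rewrite doubleS (disS _ _ _ lt_2m) (disS _ _ _ (ltnW lt_2m)) IHm ?(ltnW lt_mk) //.
rewrite !in_pair_instance ?(ltnW lt_2m_2k) //= !ffunE /= doubleK uphalf_double.
by rewrite ltnS; case: (ltngtP i m).
Qed.

Lemma cost_all_true_le : minmax_cost D [ffun => true] <= 3.
Proof.
apply/bigmax_leqP => i _.
by rewrite dis_pair_total dis_all_true //; case: (i < k).
Qed.

Definition count_false o m := #|[set t : 'I_l | (t < m) && ~~ o t]|.

Lemma dis_before_own_pair o i m : m <= i.*2 -> m <= k.*2 -> dis D o i m = count_false o m.
Proof.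
move=> le_m_2i le_m_2k; apply: eq_card => t; rewrite !inE.
case lt_t: (t < m) => //=.
have lt_half : t./2 < i by rewrite ltn_half_double (leq_trans lt_t).
by rewrite in_pair_instance ?(leq_trans lt_t) // (gtn_eqF lt_half) eqbF_neg.
Qed.

Section Constrained.
Variables (tau : nat) (oA : {ffun 'I_l -> bool}).
Hypotheses (le_kn : k <= n) (le_k_tau : k <= tau).
Hypothesis satA : satisfies D (pair_constraints k tau l) oA.

Lemma count_false_ge m : m <= k -> m <= count_false oA m.*2.
Proof.
elim: m => [//|m IHm] lt_mk.
have lt_mn : m < n by apply: leq_trans le_kn.
have lt_2m_2k : m.*2.+1 < k.*2 by rewrite -doubleS leq_double.
have lt_2m : m.*2.+1 < l := ltn_trans lt_2m_2k lt_2k_l.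
have c_in : (m.+1.*2, m.+1) \in pair_constraints k tau l.
  by apply/mapP; exists m; rewrite ?mem_iota ?lt_mk //= (leq_trans lt_mk).
move/satisfiesP: satA => /(_ _ c_in (Ordinal lt_mn)) /=.
rewrite doubleS /count_false !(disS _ _ _ lt_2m) (disS _ _ _ (ltnW lt_2m)).
rewrite !(card_prefixS _ lt_2m) (card_prefixS _ (ltnW lt_2m)).
rewrite dis_before_own_pair // ?leq_double ?(ltnW lt_mk) // -/(count_false oA m.*2).
rewrite !in_pair_instance ?(ltnW lt_2m_2k) //= doubleK uphalf_double eqxx !eqb_id.
have := IHm (ltnW lt_mk); case: (oA _); case: (oA _) => /=; lia.
Qed.

Lemma satisfies_cost_ge : 0 < k -> k <= minmax_cost D oA.
Proof.
move=> k_gt0; have lt_k1n : k.-1 < n by rewrite prednK.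
apply: leq_trans _ (dis_le_cost D oA (Ordinal lt_k1n) l).
rewrite dis_pair_total -[k in k <= _](prednK k_gt0) ltnS /=.
apply: leq_trans (count_false_ge (leq_pred k)) _.
rewrite -(dis_before_own_pair _ (i := Ordinal lt_k1n)) ?leq_double ?leq_pred //.
by apply: dis_mono; rewrite leq_double leq_pred.
Qed.

End Constrained.

End PairInstance.

Theorem theorem8 :
  (exists C : nat,
     forall (n tau l : nat) (P : finType) (D : 'I_n -> 'I_l -> {set P})
            (A : seq (nat * nat)),
       0 < n -> 0 < tau -> constraint_set l tau A -> feasible D A ->
       forall o : {ffun 'I_l -> P},
       exists oA : {ffun 'I_l -> P},
         satisfies D A oA /\
         minmax_cost D oA <= C * minn tau n * minmax_cost D o)
  /\
  (exists a b : nat, 0 < a /\ 0 < b /\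
     forall n tau : nat, 0 < n -> 0 < tau ->
     exists (l : nat) (P : finType) (D : 'I_n -> 'I_l -> {set P})
            (A : seq (nat * nat)),
       constraint_set l tau A /\ feasible D A /\
       (forall o : {ffun 'I_l -> P}, 0 < minmax_cost D o) /\
       exists o : {ffun 'I_l -> P},
         forall oA : {ffun 'I_l -> P}, satisfies D A oA ->
           a * minn tau n * minmax_cost D o <= b * minmax_cost D oA).
Proof.
split.
  exists 2 => n tau l P D A n_gt0 tau_gt0 /and5P[/eqP sizeA _ _ _ _] [oF satF] o.
  case: (leqP n tau) => _.
    have [oA satA costA] := cost_le_agents o satF; exists oA; split => //.
    by apply: leq_trans costA _; rewrite leq_mul2r leq_pmull ?orbT.
  have [oA satA costA] := cost_le_constraints o satF; exists oA; split => //.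
  apply: leq_trans costA _; rewrite sizeA.
  by apply: leq_mul => //; rewrite -addn1 mul2n -addnn leq_add2l.
exists 1, 3; do 2!split => //; move=> n tau n_gt0 tau_gt0.
set k := minn tau n; set l := (tau + k.*2).+1.
have lt_2k_l : k.*2 < l by rewrite ltnS leq_addl.
exists l, bool, (@pair_instance n k l), (pair_constraints k tau l).
split.
  by apply: pair_constraints_set; [exact: ltnW | rewrite ltnW // ltnS leq_addr].
split; first by exists (alternating l); exact: alternating_satisfies.
split; first by move=> o; exact: cost_pair_gt0.
exists [ffun => true] => oA satA.
rewrite mul1n mulnC; apply: leq_mul; first exact: cost_all_true_le.
by apply: satisfies_cost_ge satA _; rewrite ?geq_minl ?geq_minr // leq_min tau_gt0.
Qed.
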